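(* Let $x\in\mathbb{R}^m$, let $Y$ be a finite set of classes, let $f:\mathbb{R}^m\to Y$ be a (measurable) classifier, and let $\{\psi_\delta\}_{\delta>0}$, $\psi_\delta:\mathbb{R}^m\to\mathbb{R}^m$, be a multiplicatively composable transformation. Let $\beta\sim\mathrm{Rayleigh}(\sigma)$ for some $\sigma>0$ and define the smoothed classifier $g(x)=\arg\max_{c\in Y}\mathbb{P}_\beta\big(f(\psi_\beta(x))=c\big)$. Let $c_A\in Y$ and put $$p_A=\mathbb{P}_\beta\big(f(\psi_\beta(x))=c_A\big),\qquad p_B=\max_{c_B\neq c_A}\mathbb{P}_\beta\big(f(\psi_\beta(x))=c_B\big).$$ Suppose $\underline{p_A},\overline{p_B}\in(0,1)$ satisfy $p_A\ge\underline{p_A}>\overline{p_B}\ge p_B$. Let $F(z)=1-e^{-z^2/(2\sigma^2)}$ ($z\ge 0$) be the CDF of $\beta$, and let $\gamma_1\in(0,1]$ and $\gamma_2\ge 1$ be the unique solutions of $$F\big(\gamma_1^{-1}F^{-1}(\overline{p_B})\big)+F\big(\gamma_1^{-1}F^{-1}(1-\underline{p_A})\big)=1,$$ $$F\big(\gamma_2^{-1}F^{-1}(\underline{p_A})\big)+F\big(\gamma_2^{-1}F^{-1}(1-\overline{p_B})\big)=1.$$ Then $g(\psi_\gamma(x))=c_A$ for every $\gamma$ with $\gamma_1<\gamma<\gamma_2$.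
   Context: A parameterized family of maps $\psi_\delta:X\to X$, $\delta\in\mathcal{B}\subset\mathbb{R}^n$, is called multiplicatively composable if $\psi_\delta\circ\psi_\theta=\psi_{\delta\cdot\theta}$ for all $\delta,\theta\in\mathcal{B}$, where $\delta\cdot\theta\in\mathcal{B}$ denotes the element-wise product. A random variable $\zeta$ has the Rayleigh distribution with scale $\sigma>0$, written $\zeta\sim\mathrm{Rayleigh}(\sigma)$, if it has density $p_\zeta(z)=\sigma^{-2}z\,e^{-z^2/(2\sigma^2)}$ for $z\ge 0$ (and $0$ for $z<0$). *)

From HB Require Import structures.
From mathcomp Require Import all_boot all_order all_algebra.
From mathcomp Require Import all_classical all_reals all_analysis.
Set Implicit Arguments. Unset Strict Implicit. Unset Printing Implicit Defensive.
Import Order.TTheory GRing.Theory Num.Theory.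
Local Open Scope classical_set_scope.
Local Open Scope ring_scope.

Definition mult_composable (R : realType) (X : Type) (psi : R -> X -> X) : Prop :=
  forall d t : R, 0 < d -> 0 < t -> forall v, psi d (psi t v) = psi (d * t) v.

Definition rayleigh_pdf (R : realType) (sigma z : R) : R :=
  if 0 <= z then sigma ^- 2 * z * expR (- z ^+ 2 / (2 * sigma ^+ 2)) else 0.

Definition rayleigh_prob (R : realType) (sigma : R) (A : set R) : \bar R :=
  (\int[@lebesgue_measure R]_(z in A) (rayleigh_pdf sigma z)%:E)%E.

(* P_beta( f(psi_beta(v)) = c ); beta > 0 almost surely, psi only defined for delta > 0 *)
Definition smoothed_prob (R : realType) (X Y : Type) (f : X -> Y)
    (psi : R -> X -> X) (sigma : R) (v : X) (c : Y) : \bar R :=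
  rayleigh_prob sigma [set z | 0 < z /\ f (psi z v) = c].

(* g(v) = c, where g(v) = argmax_c P_beta(f(psi_beta v) = c): c is the (unique) argmax,
   i.e. g(v) = c for every tie-breaking rule. *)
Definition smoothed_pred (R : realType) (X : Type) (Y : finType) (f : X -> Y)
    (psi : R -> X -> X) (sigma : R) (v : X) (c : Y) : Prop :=
  forall c', c' != c -> (smoothed_prob f psi sigma v c' < smoothed_prob f psi sigma v c)%E.

Definition rayleigh_cdf (R : realType) (sigma z : R) : R :=
  1 - expR (- z ^+ 2 / (2 * sigma ^+ 2)).

Definition rayleigh_cdf_inv (R : realType) (sigma p : R) : R :=
  xget 0 [set z : R | 0 <= z /\ rayleigh_cdf sigma z = p].

From HB Require Import structures.
From mathcomp Require Import all_boot all_order all_algebra.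
From mathcomp Require Import all_classical all_reals all_analysis.
From mathcomp Require Import measurable_realfun ring lra.
Import Order.TTheory GRing.Theory Num.Theory.
Import numFieldTopology.Exports.
Set Implicit Arguments. Unset Strict Implicit. Unset Printing Implicit Defensive.
Local Open Scope classical_set_scope.
Local Open Scope ring_scope.

(* Composability turns the smoothed probabilities at [psi gamma x] into the probabilities of
   the same events [E_c = [set z | 0 < z /\ f (psi z x) = c]] under Rayleigh(sigma * gamma).
   The likelihood ratio of Rayleigh(s * k) to Rayleigh(s) is
   [k^-2 exp ((1 - k^-2) z^2 / (2 s^2))], nondecreasing in [z >= 0] when [k >= 1] and
   nonincreasing when [k <= 1]. By the Neyman-Pearson lemma, among events of a given
   Rayleigh(sigma) probability, an interval [[0, t]] or [[t, +oo[] is extremal for the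
   Rayleigh(sigma * gamma) probability, and those are explicit in the CDF. The equations
   defining [gamma1] and [gamma2] say that the resulting lower bound for [c_A] and upper
   bound for the other classes meet at [gamma = gamma1] resp. [gamma = gamma2]. *)

Section neyman_pearson.
Context {d} {T : measurableType d} {R : realType} (mu : {measure set T -> \bar R}).

Lemma ge0_integral_setID (A L : set T) (h : T -> \bar R) :
  measurable A -> measurable L -> measurable_fun A h -> (forall z, A z -> 0 <= h z)%E ->
  (\int[mu]_(z in A) h z =
   \int[mu]_(z in A `&` L) h z + \int[mu]_(z in A `\` L) h z)%E.
Proof.
move=> mA mL mh h0; rewrite -ge0_integral_setU ?setUIDK //.
- exact: measurableI.
- exact: measurableD.
- by rewrite disj_set2E; apply/eqP/seteqP; split=> [z [[_ ?] [_ ?]] //|z //].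
Qed.

Variables (p q : T -> R) (lam : R).
Hypotheses (mp : measurable_fun setT p) (mq : measurable_fun setT q).
Hypotheses (p0 : forall z, 0 <= p z) (q0 : forall z, 0 <= q z) (lam0 : 0 <= lam).

Let measurable_EFin (h : T -> R) D : measurable_fun setT h -> measurable_fun D (EFin \o h).
Proof. by move=> mh; apply/measurable_EFinP; exact: measurable_funTS. Qed.

Let integral_setID (h : T -> R) D E : measurable_fun setT h -> (forall z, 0 <= h z) ->
  measurable D -> measurable E -> (\int[mu]_(z in D) (h z)%:E =
  \int[mu]_(z in D `&` E) (h z)%:E + \int[mu]_(z in D `\` E) (h z)%:E)%E.
Proof.
move=> mh h0 mD mE; apply: ge0_integral_setID => //; first exact: measurable_EFin.
by move=> z _; rewrite lee_fin.
Qed.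

Let integral_lamp D : measurable D ->
  (lam%:E * \int[mu]_(z in D) (p z)%:E = \int[mu]_(z in D) (lam * p z)%:E)%E.
Proof.
move=> mD; rewrite -ge0_integralZl_EFin //; last exact: measurable_EFin.
by move=> z _; rewrite lee_fin.
Qed.

Let measurable_lamp : measurable_fun setT (fun z => lam * p z).
Proof. by apply: measurable_funM => //; exact: measurable_cst. Qed.

Lemma neyman_pearson_cross (A L : set T) : measurable A -> measurable L ->
  (forall z, A z -> ~ L z -> lam * p z <= q z) ->
  (forall z, L z -> ~ A z -> q z <= lam * p z) ->
  (lam%:E * \int[mu]_(z in A) (p z)%:E + \int[mu]_(z in L) (q z)%:E <=
   lam%:E * \int[mu]_(z in L) (p z)%:E + \int[mu]_(z in A) (q z)%:E)%E.
Proof.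
move=> mA mL qA qL.
have outA :
    (\int[mu]_(z in A `\` L) (lam * p z)%:E <= \int[mu]_(z in A `\` L) (q z)%:E)%E.
  apply: ge0_le_integral; do ?[exact: measurableD | exact: measurable_EFin].
  - by move=> z _; rewrite lee_fin mulr_ge0.
  - by move=> z [Az nLz]; rewrite lee_fin qA.
have outL :
    (\int[mu]_(z in L `\` A) (q z)%:E <= \int[mu]_(z in L `\` A) (lam * p z)%:E)%E.
  apply: ge0_le_integral; do ?[exact: measurableD | exact: measurable_EFin].
  - by move=> z _; rewrite lee_fin.
  - by move=> z [Lz nAz]; rewrite lee_fin qL.
have P0 D : (0 <= \int[mu]_(z in D) (p z)%:E)%E.
  by apply: integral_ge0 => z _; rewrite lee_fin.
rewrite (integral_setID mp p0 mA mL) (integral_setID mp p0 mL mA).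
rewrite (integral_setID mq q0 mA mL) (integral_setID mq q0 mL mA) (setIC L A).
have mAL := measurableD mA mL; have mLA := measurableD mL mA.
have mAIL : measurable (A `&` L) by exact: measurableI.
rewrite !(ge0_muleDr _ (P0 _) (P0 _)) !integral_lamp //.
by rewrite addeACA [in leRHS]addeACA leeD2l // addeC leeD.
Qed.

Lemma neyman_pearson (A L : set T) : measurable A -> measurable L ->
  (forall z, A z -> ~ L z -> lam * p z <= q z) ->
  (forall z, L z -> ~ A z -> q z <= lam * p z) ->
  (\int[mu]_(z in L) (p z)%:E)%E \is a fin_num ->
  (\int[mu]_(z in L) (p z)%:E <= \int[mu]_(z in A) (p z)%:E)%E ->
  (\int[mu]_(z in L) (q z)%:E <= \int[mu]_(z in A) (q z)%:E)%E.
Proof.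
move=> mA mL qA qL L_fin PLA.
have lamPLA : (lam%:E * \int[mu]_(z in L) (p z)%:E <= lam%:E * \int[mu]_(z in A) (p z)%:E)%E.
  by rewrite lee_wpmul2l ?lee_fin.
have := le_trans (leeD2r _ lamPLA) (neyman_pearson_cross mA mL qA qL).
by rewrite leeD2lE // fin_numM.
Qed.

End neyman_pearson.

Section lebesgue_dilation.
Context {R : realType}.
Local Notation mu := (@lebesgue_measure R).
Variable k : R.
Hypothesis k_gt0 : 0 < k.

Lemma lebesgue_measure_dilation (X : set R) : measurable X ->
  mu X = (k%:E * mu ((fun z => z * k)%R @^-1` X))%E.
Proof.
move=> mX; apply: (@lebesgue_measure_unique R (mscale (NngNum (ltW k_gt0))
  (pushforward mu ((fun z : R => z * k) : _ -> measurableTypeR R)))) => //.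
  exact: mulrr_measurable.
move=> ? _ [[a b]] _ <-.
change (mu `]a, b]%classic = (k%:E * mu ((fun z : R => (z * k)%R) @^-1` `]a, b]%classic))%E).
have -> : (fun z : R => z * k) @^-1` `]a, b]%classic = `](a / k), (b / k)]%classic.
  apply/seteqP; split => z /=; rewrite !in_itv /= => /andP[h1 h2]; apply/andP; split.
  - by rewrite ltr_pdivrMr.
  - by rewrite ler_pdivlMr.
  - by rewrite -ltr_pdivrMr.
  - by rewrite -ler_pdivlMr.
rewrite !lebesgue_measure_itv /= !lte_fin ltr_pM2r ?invr_gt0 //.
case: ifP => _; last by rewrite mule0.
by rewrite -EFinB -EFinM; congr EFin; field; rewrite gt_eqF.
Qed.

Lemma ge0_integral_dilation (A : set R) (h : R -> \bar R) : measurable A ->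
  measurable_fun A h -> (forall z, A z -> 0 <= h z)%E ->
  (\int[mu]_(z in (fun z => z * k)%R @^-1` A) h (z * k)%R =
   k^-1%:E * \int[mu]_(w in A) h w)%E.
Proof.
move=> mA mh h0.
have mdil : measurable_fun setT
    ((fun z : measurableTypeR R => z * k) : _ -> measurableTypeR R).
  exact: mulrr_measurable.
have k'_ge0 : 0 <= k^-1 by rewrite invr_ge0 ltW.
change (\int[mu]_(z in (fun z => z * k)%R @^-1` A) (h \o (fun z => z * k)%R) z =
  k^-1%:E * \int[mu]_(w in A) h w)%E.
rewrite -(ge0_integral_pushforward mdil) //; last by move=> z /[!inE]; exact: h0.
rewrite -(@ge0_integral_mscale _ (measurableTypeR R) R _ A mA (NngNum k'_ge0)) //.
apply: eq_measure_integral => X mX _ /=.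
by rewrite /mscale /= [in RHS](lebesgue_measure_dilation mX) muleA -EFinM mulVf ?gt_eqF // mul1e.
Qed.

End lebesgue_dilation.

Section rayleigh_distribution.
Context {R : realType}.
Local Notation mu := (@lebesgue_measure R).
Variable s : R.
Hypothesis s_gt0 : 0 < s.

Definition rayleigh_density (z : R) : R := s ^- 2 * z * expR (- z ^+ 2 / (2 * s ^+ 2)).

Lemma rayleigh_pdfE : rayleigh_pdf s = rayleigh_density \_ `[0, +oo[.
Proof.
apply/funext => z; rewrite /rayleigh_pdf patchE.
by rewrite mem_setE in_itv /= andbT.
Qed.

Lemma continuous_rayleigh_density : continuous rayleigh_density.
Proof.
move=> z; apply: continuousM; first by apply: continuousM; [exact: cst_continuous | exact: cvg_id].
apply: continuous_comp; last exact: continuous_expR.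
apply: continuousM; last exact: cst_continuous.
by apply: continuousN; exact: exprn_continuous.
Qed.

Lemma rayleigh_pdf_ge0 (z : R) : 0 <= rayleigh_pdf s z.
Proof.
rewrite /rayleigh_pdf; case: ifP => // z0.
by rewrite mulr_ge0 ?expR_ge0 // mulr_ge0 // invr_ge0 sqr_ge0.
Qed.

Lemma rayleigh_pdf_lt0 (z : R) : z < 0 -> rayleigh_pdf s z = 0.
Proof. by move=> z0; rewrite /rayleigh_pdf lt_geF. Qed.

Lemma measurable_rayleigh_pdf : measurable_fun setT (rayleigh_pdf s).
Proof.
rewrite rayleigh_pdfE; apply/measurable_restrict => //; apply: measurable_funTS.
exact: continuous_measurable_fun continuous_rayleigh_density.
Qed.

Lemma is_derive_rayleigh_cdf (z : R) : is_derive z 1 (rayleigh_cdf s) (rayleigh_density z).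
Proof.
have -> : rayleigh_density z =
    0 - expR (- z ^+ 2 / (2 * s ^+ 2)) * ((- (z *+ 2)) / (2 * s ^+ 2)).
  by rewrite /rayleigh_density; field; rewrite gt_eqF.
have : is_derive z 1 (fun x : R => - x ^+ 2 / (2 * s ^+ 2)) (z *- 2 / (2 * s ^+ 2)).
  by apply: is_derive_eq; rewrite scaler0 add0r /GRing.scale /= mulr1 mulrC -mulr2n.
move=> ?; apply: is_deriveB.
Qed.

Lemma rayleigh_cdf0 : rayleigh_cdf s 0 = 0.
Proof. by rewrite /rayleigh_cdf expr0n /= oppr0 mul0r expR0 subrr. Qed.

Lemma derivable_rayleigh_cdf (z : R) : derivable (rayleigh_cdf s) z 1.
Proof. by have [] := is_derive_rayleigh_cdf z. Qed.

Lemma continuous_rayleigh_cdf : continuous (rayleigh_cdf s).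
Proof.
move=> z; apply/differentiable_continuous/derivable1_diffP.
exact: derivable_rayleigh_cdf.
Qed.

Lemma derive1_rayleigh_cdf (z : R) : (rayleigh_cdf s)^`()%classic z = rayleigh_density z.
Proof. by rewrite derive1E; have [_ ->] := is_derive_rayleigh_cdf z. Qed.

Lemma rayleigh_cdf_cvgy : rayleigh_cdf s x @[x --> +oo] --> (1 : R).
Proof.
have -> : rayleigh_cdf s = (fun y => 1 - expR (- y)) \o (fun x => (2 * s ^+ 2)^-1 * x ^+ 2).
  by apply/funext => x; rewrite /rayleigh_cdf /= mulrC mulrN.
rewrite -[X in _ --> X]subr0.
apply: (@cvg_comp _ _ _ (fun x => (2 * s ^+ 2)^-1 * x ^+ 2) (fun y => 1 - expR (- y))
  _ (pinfty_nbhs R)); last by apply: cvgB; [exact: cvg_cst | exact: cvgr_expR].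
apply: gt0_cvgMry; last exact: cvgr_expr2.
by rewrite invr_gt0 mulr_gt0 // exprn_gt0.
Qed.

Lemma rayleigh_prob_itv0 (t : R) : 0 <= t -> rayleigh_prob s `[0, t] = (rayleigh_cdf s t)%:E.
Proof.
rewrite le_eqVlt => /predU1P[<-|t_gt0].
  by rewrite /rayleigh_prob set_itv1 integral_set1 rayleigh_cdf0.
transitivity (\int[mu]_(z in `[0%R, t]%classic) (rayleigh_density z)%:E)%E.
  apply: eq_integral => z; rewrite inE /= in_itv /= => /andP[z0 _].
  by rewrite /rayleigh_pdf z0.
rewrite (@continuous_FTC2 _ _ (rayleigh_cdf s)) //.
- by rewrite rayleigh_cdf0 sube0.
- exact: continuous_subspaceT continuous_rayleigh_density.
- split; first by move=> z _; exact: derivable_rayleigh_cdf.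
  + exact/cvg_at_right_filter/continuous_rayleigh_cdf.
  + exact/cvg_at_left_filter/continuous_rayleigh_cdf.
- by move=> z _; exact: derive1_rayleigh_cdf.
Qed.

Lemma rayleigh_prob_itvy (t : R) : 0 <= t -> rayleigh_prob s `[t, +oo[ = (1 - rayleigh_cdf s t)%:E.
Proof.
move=> t0; transitivity (\int[mu]_(z in `[t, +oo[%classic) (rayleigh_density z)%:E)%E.
  apply: eq_integral => z; rewrite inE /= in_itv /= andbT => tz.
  by rewrite /rayleigh_pdf (le_trans t0 tz).
rewrite (@ge0_continuous_FTC2y _ rayleigh_density (rayleigh_cdf s) t 1) //.
- move=> z tz; have := rayleigh_pdf_ge0 z; by rewrite /rayleigh_pdf (le_trans t0 tz).
- exact: continuous_subspaceT continuous_rayleigh_density.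
- exact: rayleigh_cdf_cvgy.
- exact/cvg_at_right_filter/continuous_rayleigh_cdf.
- by move=> z _; exact: derive1_rayleigh_cdf.
Qed.

Lemma rayleigh_prob_ge0 (A : set R) : (0 <= rayleigh_prob s A)%E.
Proof. by apply: integral_ge0 => z _; rewrite lee_fin rayleigh_pdf_ge0. Qed.

Lemma rayleigh_cdf_ltr (a b : R) : 0 <= a -> a < b -> rayleigh_cdf s a < rayleigh_cdf s b.
Proof.
move=> a0 ab; rewrite /rayleigh_cdf ltrD2l ltrN2 ltr_expR !mulNr ltrN2.
rewrite ltr_pM2r ?invr_gt0 ?mulr_gt0 ?exprn_gt0 //.
by rewrite -subr_gt0 subr_sqr mulr_gt0 ?subr_gt0 // ltr_pwDl // (le_lt_trans a0).
Qed.

Lemma rayleigh_cdf_inv_spec (p : R) : 0 < p < 1 ->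
  0 < rayleigh_cdf_inv s p /\ rayleigh_cdf s (rayleigh_cdf_inv s p) = p.
Proof.
move=> /andP[p0 p1].
have F_onto : exists z, 0 <= z /\ rayleigh_cdf s z = p.
  have l_ge0 : 0 <= - (2 * s ^+ 2) * ln (1 - p).
    rewrite mulNr -mulrN; apply: mulr_ge0; first by rewrite mulr_ge0 // sqr_ge0.
    by rewrite oppr_ge0 ltW // ln_lt0 // subr_gt0 p1 /= ltrBlDr ltrDl.
  exists (Num.sqrt (- (2 * s ^+ 2) * ln (1 - p))); split; first exact: sqrtr_ge0.
  rewrite /rayleigh_cdf sqr_sqrtr //.
  have -> : - (- (2 * s ^+ 2) * ln (1 - p)) / (2 * s ^+ 2) = ln (1 - p).
    by field; rewrite gt_eqF.
  by rewrite lnK ?posrE ?subr_gt0 // opprB addrC subrK.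
have [inv_ge0 Finv] := xgetPex 0 F_onto.
rewrite /rayleigh_cdf_inv; split => //.
rewrite lt_neqAle inv_ge0 andbT; apply/negP => /eqP inv0.
by move: Finv; rewrite -inv0 rayleigh_cdf0 => p_eq0; rewrite -p_eq0 ltxx in p0.
Qed.

End rayleigh_distribution.

Section rayleigh_dilation.
Context {R : realType}.
Variables s k : R.
Hypotheses (s_gt0 : 0 < s) (k_gt0 : 0 < k).

Lemma rayleigh_pdf_dilation (z : R) : rayleigh_pdf s z = k * rayleigh_pdf (s * k) (z * k).
Proof.
rewrite /rayleigh_pdf pmulr_lge0 //; case: ifP => _; last by rewrite mulr0.
have -> : - (z * k) ^+ 2 / (2 * (s * k) ^+ 2) = - z ^+ 2 / (2 * s ^+ 2).
  by field; rewrite !gt_eqF.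
by field; rewrite !gt_eqF.
Qed.

Lemma rayleigh_prob_dilation (A : set R) : measurable A ->
  rayleigh_prob s ((fun z => z * k) @^-1` A) = rayleigh_prob (s * k) A.
Proof.
move=> mA; rewrite /rayleigh_prob.
under eq_integral do rewrite rayleigh_pdf_dilation EFinM.
rewrite ge0_integralZl_EFin ?ltW //; last 2 first.
- by move=> z _; rewrite lee_fin rayleigh_pdf_ge0.
- apply/measurable_EFinP; apply: measurable_funTS.
  by apply: measurableT_comp; [exact: measurable_rayleigh_pdf | exact: mulrr_measurable].
rewrite (@ge0_integral_dilation _ k k_gt0 A (fun w => (rayleigh_pdf (s * k) w)%:E)) //.
- by rewrite muleA -EFinM mulfV ?gt_eqF // mul1e.
- apply/measurable_EFinP; apply: measurable_funTS; exact: measurable_rayleigh_pdf.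
- by move=> z _; rewrite lee_fin rayleigh_pdf_ge0.
- by rewrite -[X in measurable X]setTI; exact: mulrr_measurable.
Qed.

Lemma rayleigh_cdf_dilation (t : R) : rayleigh_cdf (s * k) t = rayleigh_cdf s (k^-1 * t).
Proof. by rewrite /rayleigh_cdf; congr (_ - expR _); field; rewrite !gt_eqF. Qed.

Let sk_gt0 : 0 < s * k. Proof. exact: mulr_gt0. Qed.

Definition rayleigh_likelihood_ratio (z : R) : R :=
  k ^- 2 * expR ((1 - k ^- 2) / (2 * s ^+ 2) * z ^+ 2).
Local Notation lr := rayleigh_likelihood_ratio.

Lemma rayleigh_pdf_dilationE (z : R) :
  rayleigh_pdf (s * k) z = lr z * rayleigh_pdf s z.
Proof.
rewrite /rayleigh_pdf /rayleigh_likelihood_ratio; case: ifP => _; last by rewrite mulr0.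
have -> : - z ^+ 2 / (2 * (s * k) ^+ 2) =
    (1 - k ^- 2) / (2 * s ^+ 2) * z ^+ 2 + (- z ^+ 2 / (2 * s ^+ 2)).
  by field; rewrite !gt_eqF.
by rewrite expRD; field; rewrite !gt_eqF.
Qed.

Lemma rayleigh_likelihood_ratio_ge0 (z : R) : 0 <= lr z.
Proof. by rewrite mulr_ge0 ?expR_ge0 // invr_ge0 sqr_ge0. Qed.

Lemma rayleigh_likelihood_ratio_homo (z t : R) :
  1 <= k -> z ^+ 2 <= t ^+ 2 -> lr z <= lr t.
Proof.
move=> k_ge1 zt; rewrite ler_wpM2l ?invr_ge0 ?sqr_ge0 // ler_expR ler_wpM2l //.
apply: divr_ge0; last by rewrite mulr_ge0 // sqr_ge0.
by rewrite subr_ge0 invf_le1 ?exprn_gt0 // expr_ge1 // (le_trans ler01).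
Qed.

Lemma rayleigh_likelihood_ratio_nhomo (z t : R) :
  k <= 1 -> z ^+ 2 <= t ^+ 2 -> lr t <= lr z.
Proof.
move=> k_le1 zt; rewrite ler_wpM2l ?invr_ge0 ?sqr_ge0 // ler_expR ler_wnM2l //.
rewrite pmulr_lle0 ?invr_gt0 ?mulr_gt0 ?exprn_gt0 // subr_le0.
by rewrite invf_ge1 ?exprn_gt0 // exprn_ile1 // ltW.
Qed.

Lemma rayleigh_neyman_pearson (t : R) (A L : set R) : measurable A -> measurable L ->
  (forall z, A z -> ~ L z -> 0 <= z -> lr t <= lr z) ->
  (forall z, L z -> ~ A z -> 0 <= z -> lr z <= lr t) ->
  rayleigh_prob s L \is a fin_num -> (rayleigh_prob s L <= rayleigh_prob s A)%E ->
  (rayleigh_prob (s * k) L <= rayleigh_prob (s * k) A)%E.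
Proof.
move=> mA mL lrA lrL; apply: (neyman_pearson (lam := lr t)) => //;
  do ?[exact: measurable_rayleigh_pdf | exact: rayleigh_pdf_ge0
      | exact: rayleigh_likelihood_ratio_ge0].
- move=> z Az nLz; rewrite rayleigh_pdf_dilationE; have [z0|z0] := leP 0 z.
    by rewrite ler_wpM2r ?rayleigh_pdf_ge0 ?lrA.
  by rewrite rayleigh_pdf_lt0 // !mulr0.
- move=> z Lz nAz; rewrite rayleigh_pdf_dilationE; have [z0|z0] := leP 0 z.
    by rewrite ler_wpM2r ?rayleigh_pdf_ge0 ?lrL.
  by rewrite rayleigh_pdf_lt0 // !mulr0.
Qed.

Lemma rayleigh_prob_dilation_cdf_le (t : R) (A : set R) :
  1 <= k -> 0 <= t -> measurable A ->
  ((rayleigh_cdf s t)%:E <= rayleigh_prob s A)%E ->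
  ((rayleigh_cdf (s * k) t)%:E <= rayleigh_prob (s * k) A)%E.
Proof.
move=> k_ge1 t0 mA; rewrite -(rayleigh_prob_itv0 s_gt0 t0) -(rayleigh_prob_itv0 sk_gt0 t0).
apply: (rayleigh_neyman_pearson (t := t)) => //.
- move=> z _ /=; rewrite in_itv /= => /negP; rewrite negb_and -!ltNge.
  move=> /orP[/lt_geF->//|tz] z0.
  apply: rayleigh_likelihood_ratio_homo => //.
  by rewrite ler_sqr ?nnegrE // ltW.
- move=> z /=; rewrite in_itv /= => /andP[z0 zt] _ _.
  apply: rayleigh_likelihood_ratio_homo => //.
  by rewrite ler_sqr ?nnegrE.
- by rewrite rayleigh_prob_itv0.
Qed.

Lemma rayleigh_prob_dilation_le_ccdf (t : R) (B : set R) :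
  1 <= k -> 0 <= t -> measurable B ->
  (rayleigh_prob s B <= (1 - rayleigh_cdf s t)%:E)%E ->
  (rayleigh_prob (s * k) B <= (1 - rayleigh_cdf (s * k) t)%:E)%E.
Proof.
move=> k_ge1 t0 mB PB; have B_fin : rayleigh_prob s B \is a fin_num.
  by rewrite ge0_fin_numE ?rayleigh_prob_ge0 // (le_lt_trans PB) ?ltry.
move: PB; rewrite -(rayleigh_prob_itvy s_gt0 t0) -(rayleigh_prob_itvy sk_gt0 t0).
apply: (rayleigh_neyman_pearson (t := t)) => //.
- move=> z /=; rewrite in_itv /= andbT => tz _ _.
  apply: rayleigh_likelihood_ratio_homo => //.
  by rewrite ler_sqr ?nnegrE // (le_trans t0).
- move=> z _ /=; rewrite in_itv /= andbT => /negP; rewrite -ltNge => zt z0.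
  apply: rayleigh_likelihood_ratio_homo => //.
  by rewrite ler_sqr ?nnegrE // ltW.
Qed.

Lemma rayleigh_prob_contraction_ccdf_le (t : R) (A : set R) :
  k <= 1 -> 0 <= t -> measurable A ->
  ((1 - rayleigh_cdf s t)%:E <= rayleigh_prob s A)%E ->
  ((1 - rayleigh_cdf (s * k) t)%:E <= rayleigh_prob (s * k) A)%E.
Proof.
move=> k_le1 t0 mA; rewrite -(rayleigh_prob_itvy s_gt0 t0) -(rayleigh_prob_itvy sk_gt0 t0).
apply: (rayleigh_neyman_pearson (t := t)) => //.
- move=> z _ /=; rewrite in_itv /= andbT => /negP; rewrite -ltNge => zt z0.
  apply: rayleigh_likelihood_ratio_nhomo => //.
  by rewrite ler_sqr ?nnegrE // ltW.
- move=> z /=; rewrite in_itv /= andbT => tz _ _.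
  apply: rayleigh_likelihood_ratio_nhomo => //.
  by rewrite ler_sqr ?nnegrE // (le_trans t0).
- by rewrite rayleigh_prob_itvy.
Qed.

Lemma rayleigh_prob_contraction_le_cdf (t : R) (B : set R) :
  k <= 1 -> 0 <= t -> measurable B ->
  (rayleigh_prob s B <= (rayleigh_cdf s t)%:E)%E ->
  (rayleigh_prob (s * k) B <= (rayleigh_cdf (s * k) t)%:E)%E.
Proof.
move=> k_le1 t0 mB PB; have B_fin : rayleigh_prob s B \is a fin_num.
  by rewrite ge0_fin_numE ?rayleigh_prob_ge0 // (le_lt_trans PB) ?ltry.
move: PB; rewrite -(rayleigh_prob_itv0 s_gt0 t0) -(rayleigh_prob_itv0 sk_gt0 t0).
apply: (rayleigh_neyman_pearson (t := t)) => //.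
- move=> z /=; rewrite in_itv /= => /andP[z0 zt] _ _.
  apply: rayleigh_likelihood_ratio_nhomo => //.
  by rewrite ler_sqr ?nnegrE.
- move=> z _ /=; rewrite in_itv /= => /negP; rewrite negb_and -!ltNge.
  move=> /orP[/lt_geF->//|tz] z0.
  apply: rayleigh_likelihood_ratio_nhomo => //.
  by rewrite ler_sqr ?nnegrE // ltW.
Qed.

End rayleigh_dilation.

Section rayleigh_margin.
Context {R : realType}.
Variables (s pA pB : R) (A B : set R).
Hypotheses (s_gt0 : 0 < s) (pA01 : 0 < pA < 1) (pB01 : 0 < pB < 1).
Hypotheses (mA : measurable A) (mB : measurable B).
Hypotheses (PA : (pA%:E <= rayleigh_prob s A)%E) (PB : (rayleigh_prob s B <= pB%:E)%E).

Let cpA01 : 0 < 1 - pA < 1.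
Proof. by case/andP: pA01 => ? ?; apply/andP; split; lra. Qed.
Let cpB01 : 0 < 1 - pB < 1.
Proof. by case/andP: pB01 => ? ?; apply/andP; split; lra. Qed.

Let rayleigh_cdf_lt_scale (t a b : R) : 0 < t -> 0 < a < b ->
  rayleigh_cdf s (a * t) < rayleigh_cdf s (b * t).
Proof.
move=> t_gt0 /andP[a_gt0 ab]; apply: rayleigh_cdf_ltr => //.
  by rewrite mulr_ge0 // ltW.
by rewrite ltr_pM2r.
Qed.

(* At scale [k'] the worst-case bounds for [A] and [B] meet by the defining equation;
   since [F (t / k)] decreases in [k], at scale [k] they are strictly separated. *)
Lemma rayleigh_prob_dilation_margin (k k' : R) : 1 <= k -> k < k' ->
  rayleigh_cdf s (k'^-1 * rayleigh_cdf_inv s pA)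
    + rayleigh_cdf s (k'^-1 * rayleigh_cdf_inv s (1 - pB)) = 1 ->
  (rayleigh_prob (s * k) B < rayleigh_prob (s * k) A)%E.
Proof.
move=> k_ge1 kk' k'_eq.
have k_gt0 : 0 < k := lt_le_trans ltr01 k_ge1.
have [tA_gt0 FtA] := rayleigh_cdf_inv_spec s_gt0 pA01.
have [tB_gt0 FtB] := rayleigh_cdf_inv_spec s_gt0 cpB01.
have lowA := rayleigh_prob_dilation_cdf_le s_gt0 k_gt0 k_ge1 (ltW tA_gt0) mA.
have upB := rayleigh_prob_dilation_le_ccdf s_gt0 k_gt0 k_ge1 (ltW tB_gt0) mB.
rewrite FtA FtB opprB addrC subrK in lowA upB.
apply: le_lt_trans (upB PB) _; apply: lt_le_trans (lowA PA).
have k'_gt0 := lt_trans k_gt0 kk'.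
have ltk : 0 < k'^-1 < k^-1 by rewrite invr_gt0 k'_gt0 ltf_pV2.
have := rayleigh_cdf_lt_scale tA_gt0 ltk; have := rayleigh_cdf_lt_scale tB_gt0 ltk.
by rewrite !rayleigh_cdf_dilation // lte_fin; lra.
Qed.

Lemma rayleigh_prob_contraction_margin (k k' : R) : 0 < k' -> k' < k -> k <= 1 ->
  rayleigh_cdf s (k'^-1 * rayleigh_cdf_inv s pB)
    + rayleigh_cdf s (k'^-1 * rayleigh_cdf_inv s (1 - pA)) = 1 ->
  (rayleigh_prob (s * k) B < rayleigh_prob (s * k) A)%E.
Proof.
move=> k'_gt0 k'k k_le1 k'_eq.
have k_gt0 := lt_trans k'_gt0 k'k.
have [tA_gt0 FtA] := rayleigh_cdf_inv_spec s_gt0 cpA01.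
have [tB_gt0 FtB] := rayleigh_cdf_inv_spec s_gt0 pB01.
have lowA := rayleigh_prob_contraction_ccdf_le s_gt0 k_gt0 k_le1 (ltW tA_gt0) mA.
have upB := rayleigh_prob_contraction_le_cdf s_gt0 k_gt0 k_le1 (ltW tB_gt0) mB.
rewrite FtA FtB opprB addrC subrK in lowA upB.
apply: le_lt_trans (upB PB) _; apply: lt_le_trans (lowA PA).
have ltk : 0 < k^-1 < k'^-1 by rewrite invr_gt0 k_gt0 ltf_pV2.
have := rayleigh_cdf_lt_scale tA_gt0 ltk; have := rayleigh_cdf_lt_scale tB_gt0 ltk.
by rewrite !rayleigh_cdf_dilation // lte_fin; lra.
Qed.

End rayleigh_margin.

Lemma smoothed_prob_mult_composable (R : realType) (X Y : Type) (f : X -> Y)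
    (psi : R -> X -> X) (s g : R) (v : X) (c : Y) :
  mult_composable psi -> 0 < s -> 0 < g ->
  measurable [set z : R | 0 < z /\ f (psi z v) = c] ->
  smoothed_prob f psi s (psi g v) c =
    rayleigh_prob (s * g) [set z : R | 0 < z /\ f (psi z v) = c].
Proof.
move=> psiM s_gt0 g_gt0 mE; rewrite /smoothed_prob -rayleigh_prob_dilation //.
congr rayleigh_prob; apply/seteqP; split => z /= [z_gt0 fz].
- by rewrite mulr_gt0 // -psiM.
- by move: z_gt0 fz; rewrite pmulr_lgt0 // => z_gt0; rewrite -psiM.
Qed.

Theorem theorem1 (R : realType) (m : nat) (Y : finType)
  (f : 'rV[R]_m -> Y) (psi : R -> 'rV[R]_m -> 'rV[R]_m) (x : 'rV[R]_m)
  (sigma : R) (cA : Y) (pA_lo pB_hi gamma1 gamma2 : R) :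
  mult_composable psi ->
  0 < sigma ->
  (forall c : Y, measurable [set z : R | 0 < z /\ f (psi z x) = c]) ->
  0 < pA_lo < 1 -> 0 < pB_hi < 1 ->
  (pA_lo%:E <= smoothed_prob f psi sigma x cA)%E ->
  pB_hi < pA_lo ->
  (forall cB : Y, cB != cA -> (smoothed_prob f psi sigma x cB <= pB_hi%:E)%E) ->
  0 < gamma1 <= 1 ->
  rayleigh_cdf sigma (gamma1^-1 * rayleigh_cdf_inv sigma pB_hi)
    + rayleigh_cdf sigma (gamma1^-1 * rayleigh_cdf_inv sigma (1 - pA_lo)) = 1 ->
  1 <= gamma2 ->
  rayleigh_cdf sigma (gamma2^-1 * rayleigh_cdf_inv sigma pA_lo)
    + rayleigh_cdf sigma (gamma2^-1 * rayleigh_cdf_inv sigma (1 - pB_hi)) = 1 ->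
  forall gamma : R, gamma1 < gamma < gamma2 ->
    smoothed_pred f psi sigma (psi gamma x) cA.
Proof.
move=> psiM sigma_gt0 mE pA01 pB01 PA _ PB /andP[g1_gt0 _] g1_eq _ g2_eq g /andP[g1g gg2].
have g_gt0 := lt_trans g1_gt0 g1g.
move=> c c_neq; rewrite !(smoothed_prob_mult_composable psiM sigma_gt0 g_gt0 (mE _)).
have [g_ge1|g_lt1] := leP 1 g.
- exact: (rayleigh_prob_dilation_margin sigma_gt0 pA01 pB01 (mE cA) (mE c) PA (PB c c_neq)
    g_ge1 gg2 g2_eq).
- exact: (rayleigh_prob_contraction_margin sigma_gt0 pA01 pB01 (mE cA) (mE c) PA (PB c c_neq)
    g1_gt0 g1g (ltW g_lt1) g1_eq).
Qed.
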